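(* Even for update sequences of width $3$: any deterministic strict dynamic embedding into HSTs incurs distortion $\Omega(2^n)$, and any probabilistic strict dynamic embedding into HSTs incurs distortion $\Omega(n)$, where $n$ is the number of points of the sequence. Furthermore, any deterministic online monotone embedding into HSTs incurs distortion $\Omega(n)$ on update sequences of width $3$.
   Context: For $\mu \ge 1$, a $\mu$-HST is a metric space whose points are the leaves of a rooted tree $T$; every node $v$ has weight $\varphi(v)\ge 0$, $\varphi(v)=0$ iff $v$ is a leaf, $\varphi(v)\le\varphi(u)/\mu$ when $v$ is a child of $u$; the distance of leaves $u,v$ is $\varphi(\mathrm{lca}(u,v))$. ''HSTs'' denotes the family of such metrics. An update sequence on a metric $(X,d_X)$ is a sequence of pairs $(v_t,o_t)\in X\times\{+,-\}$ ($v_t$ arrives if $o_t=+$, leaves if $o_t=-$) with alive sets $L_0=\varnothing$, $L_t=L_{t-1}\cup\{v_t\}$ or $L_{t-1}\setminus\{v_t\}$ accordingly; its width is $\max_t|L_t|$. A deterministic online monotone embedding into HSTs receives the sequence one element at a time and after $\sigma_t$ (depending only on $\sigma_1,\dots,\sigma_t$) outputs a metric $d_t$ on $L_t$ that is an HST, satisfies $d_t(u,v)\ge d_X(u,v)$ for $u,v\in L_t$, and $d_t(u,v)\le d_{t-1}(u,v)$ for $u,v\in L_{t-1}\cap L_t$. It is strict if moreover $d_t(u,v)=d_{t-1}(u,v)$ for all $u,v\in L_{t-1}\cap L_t$ (distances are fixed upon arrival). A probabilistic embedding is a distribution over deterministic ones (sequence chosen independently of the randomness). Distortion $\lambda$ means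 $d_t(u,v)\le\lambda d_X(u,v)$ (deterministic) resp. $\mathbb E[d_t(u,v)]\le\lambda d_X(u,v)$ (probabilistic) for all $t$ and $u,v\in L_t$. *)

From HB Require Import structures.
From mathcomp Require Import all_boot all_order all_algebra.
From mathcomp Require Import all_classical all_reals all_analysis.
Set Implicit Arguments. Unset Strict Implicit. Unset Printing Implicit Defensive.
Import Order.TTheory GRing.Theory Num.Theory.
Local Open Scope ring_scope.

Section Defs.
Variables (R : realType) (X : choiceType).

Definition is_metric (d : X -> X -> R) : Prop :=
  (forall x y, 0 <= d x y) /\ (forall x y, d x y = 0 <-> x = y) /\
  (forall x y, d x y = d y x) /\ (forall x y z, d x z <= d x y + d y z).

(** Update sequences: (v, true) = v arrives (+), (v, false) = v leaves (-). *)
Definition update_seq := seq (X * bool).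

Definition alive (s : update_seq) (x : X) : bool :=
  foldl (fun b p => if p.1 == x then p.2 else b) false s.

Definition alive_set (s : update_seq) : seq X :=
  [seq x <- undup (map fst s) | alive s x].

Definition width (s : update_seq) : nat :=
  \max_(t < (size s).+1) size (alive_set (take t s)).

Definition npoints (s : update_seq) : nat := size (undup (map fst s)).

(** mu-HST on the finite set S: a rooted tree (node type N, parent map par with
    par root = root, every node reaching the root), weights phi, and a bijection
    leaf between S and the leaves of the tree, such that distances are the
    weights of lowest common ancestors. *)
Definition is_muHST (mu : R) (S : seq X) (dd : X -> X -> R) : Prop :=
  exists (N : finType) (root : N) (par : N -> N) (phi : N -> R) (leaf : X -> N),
    let anc a v := exists k, iter k par v = a in
    let is_leaf v := forall w, w != root -> par w != v in
    let is_lca u v w := [/\ anc w u, anc w v & forall a, anc a u -> anc a v -> anc a w] in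
    [/\ par root = root,
        (forall v, exists k, iter k par v = root),
        (forall v, 0 <= phi v),
        (forall v, phi v = 0 <-> is_leaf v) &
        (forall v, v != root -> phi v <= phi (par v) / mu)] /\
    [/\ {in S &, injective leaf},
        (forall x, x \in S -> is_leaf (leaf x)),
        (forall v, is_leaf v -> exists2 x, x \in S & leaf x = v) &
        (forall x y, x \in S -> y \in S -> forall w,
            is_lca (leaf x) (leaf y) w -> dd x y = phi w)].

(** The metric dd restricted to S belongs to the family "HSTs"
    (the empty metric space is counted as an HST). *)
Definition is_HST (S : seq X) (dd : X -> X -> R) : Prop :=
  S = [::] \/ exists mu : R, 1 <= mu /\ is_muHST mu S dd.

(** A deterministic online algorithm: the output d_t is a function of the
    prefix sigma_1..sigma_t (only its values on L_t matter). *)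
Definition online_alg := update_seq -> X -> X -> R.

Definition monotone_embedding (dX : X -> X -> R) (A : online_alg) : Prop :=
  forall (q : update_seq) (e : X * bool),
    let p := rcons q e in
    [/\ is_HST (alive_set p) (A p),
        (forall u v, alive p u -> alive p v -> dX u v <= A p u v) &
        (forall u v, alive q u -> alive q v -> alive p u -> alive p v ->
           A p u v <= A q u v)].

Definition strict_embedding (dX : X -> X -> R) (A : online_alg) : Prop :=
  monotone_embedding dX A /\
  forall (q : update_seq) (e : X * bool),
    let p := rcons q e in
    forall u v, alive q u -> alive q v -> alive p u -> alive p v ->
      A p u v = A q u v.

Definition distortion_le (dX : X -> X -> R) (A : online_alg) (s : update_seq)
    (lam : R) : Prop :=
  forall t, (1 <= t <= size s)%N -> forall u v,
    alive (take t s) u -> alive (take t s) v ->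
    A (take t s) u v <= lam * dX u v.

Definition prob_distortion_le (dX : X -> X -> R) {d : measure_display}
    {Omega : measurableType d} (P : probability Omega R)
    (A : Omega -> online_alg) (s : update_seq) (lam : R) : Prop :=
  forall t, (1 <= t <= size s)%N -> forall u v,
    alive (take t s) u -> alive (take t s) v ->
    (\int[P]_w (A w (take t s) u v)%:E <= (lam * dX u v)%:E)%E.

End Defs.

(* Every HST metric is an ultrametric, so whenever a, m, b are alive together the
   embedding satisfies d(a, b) <= max (d(a, m), d(m, b)).  The adversary works on the
   real line and keeps two points alive, repeatedly adding a third one and deleting
   one of the old ones.
   Strict embeddings: bisect the alive interval [lo, hi] and keep the half whose
   embedded length is at least d(lo, hi); since distances are frozen, the embedded
   length stays >= 1 while the true length is 2^-K after K steps.
   Random strict embeddings: for each history, both halves have embedded length at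
   least their true length 2^-(K+1) and one of them at least the parent's, so the
   total embedded length over all 2^K histories of depth K is >= 1 + K/2 for every
   outcome; averaging, some history has expected distortion >= 1 + K/2.
   Monotone embeddings: alive {0, j+1}, add j+2 and delete j+1.  Then d(0, j+2) can
   only shrink afterwards, and was at most max (d(0, j+1), d(j+1, j+2)) <= lambda, so
   d(0, j+1) <= lambda for all j although |0 - (j+1)| = j+1. *)

From HB Require Import structures.
From mathcomp Require Import all_boot all_order all_algebra.
From mathcomp Require Import all_classical all_reals all_analysis.
From mathcomp Require Import ring lra zify measurable_realfun.
Import Order.TTheory GRing.Theory Num.Theory.
Local Open Scope ring_scope.
Set Implicit Arguments. Unset Strict Implicit.

Section UpdateSequences.
Variable X : choiceType.
Implicit Types (s : update_seq X) (a b m x : X).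

Lemma alive_rcons s v o x :
  alive (rcons s (v, o)) x = if v == x then o else alive s x.
Proof. by rewrite /alive foldl_rcons. Qed.

Lemma alive_size_gt0 s x : alive s x -> (0 < size s)%N.
Proof. by case: s. Qed.

Lemma alive_mem_fst s x : alive s x -> x \in map fst s.
Proof.
elim/last_ind: s => [|s [v o] IHs] //; rewrite alive_rcons map_rcons mem_rcons inE.
by case: eqP => [->|_ /IHs ->]; rewrite ?eqxx ?orbT.
Qed.

Lemma mem_alive_set s x : (x \in alive_set s) = alive s x.
Proof.
rewrite /alive_set mem_filter mem_undup.
by case sx: (alive s x) => //=; apply: alive_mem_fst.
Qed.

Lemma size_alive_set s (L : seq X) :
  uniq L -> (forall x, alive s x = (x \in L)) -> size (alive_set s) = size L.
Proof.
move=> uL sL; apply/perm_size/uniq_perm => [||x]; rewrite ?mem_alive_set //.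
by rewrite filter_uniq ?undup_uniq.
Qed.

Lemma width_rcons s e :
  width (rcons s e) = maxn (width s) (size (alive_set (rcons s e))).
Proof.
rewrite /width size_rcons big_ord_recr /= take_oversize ?size_rcons //.
congr maxn; apply: eq_bigr => i _.
by rewrite -cats1 takel_cat // -ltnS.
Qed.

Lemma npoints_rcons s v o :
  npoints (rcons s (v, o)) = if v \in map fst s then npoints s else (npoints s).+1.
Proof.
rewrite /npoints map_rcons -(@perm_size _ (undup (v :: map fst s))).
  by rewrite /=; case: ifP.
by apply: uniq_perm; rewrite ?undup_uniq // => x; rewrite !mem_undup mem_rcons.
Qed.

Definition init_seq a b : update_seq X := [:: (a, true); (b, true)].

Definition exchange s b m : update_seq X := rcons (rcons s (m, true)) (b, false).

Lemma alive_exchange s b m x :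
  alive (exchange s b m) x = (b != x) && ((m == x) || alive s x).
Proof. by rewrite !alive_rcons; case: (b == x); case: (m == x). Qed.

Lemma alive_exchange_kept s a b m : alive s a -> a != b -> alive (exchange s b m) a.
Proof. by rewrite alive_exchange eq_sym => -> ->; rewrite orbT. Qed.

Lemma alive_exchange_new s b m : m != b -> alive (exchange s b m) m.
Proof. by rewrite alive_exchange eq_sym eqxx => ->. Qed.

Lemma mem_fst_exchange s b m x :
  (x \in map fst (exchange s b m)) = [|| x == b, x == m | x \in map fst s].
Proof. by rewrite /exchange !map_rcons mem_rcons inE mem_rcons inE. Qed.

Definition two_alive s a b k :=
  [/\ a != b, forall x, alive s x = (x \in [:: a; b]),
      npoints s = k.+2 & width s = minn k.+2 3].

Lemma two_aliveC s a b k : two_alive s a b k -> two_alive s b a k.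
Proof.
case=> ab sab ns ws; split=> // [|x]; first by rewrite eq_sym.
by rewrite sab !inE orbC.
Qed.

Lemma two_alive_init a b : a != b -> two_alive (init_seq a b) a b 0.
Proof.
move=> ab; have sab x : alive (init_seq a b) x = (x \in [:: a; b]).
  by rewrite /alive /= !inE !(eq_sym x); case: (b == x); case: (a == x).
split=> //; first by rewrite /npoints /= inE (negbTE ab).
rewrite -[init_seq a b]/(rcons (rcons [::] (a, true)) (b, true)).
rewrite !width_rcons (size_alive_set (L := [:: a; b]) _ sab) /=; last by rewrite inE ab.
rewrite (size_alive_set (L := [:: a])) => [|//|x]; first by rewrite /width big_ord1.
by rewrite /alive /= inE eq_sym; case: (x == a).
Qed.

Lemma two_alive_exchange s a b m k :
  m \notin map fst s -> two_alive s a b k -> two_alive (exchange s b m) a m k.+1.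
Proof.
move=> ms [ab sab ns ws].
have fst_s x : x \in [:: a; b] -> x \in map fst s by rewrite -sab => /alive_mem_fst.
have [ma mb] : m != a /\ m != b.
  by split; apply: contraNneq ms => ->; rewrite fst_s ?inE ?eqxx ?orbT.
have sam x : alive (exchange s b m) x = (x \in [:: a; m]).
  rewrite alive_exchange sab !inE (eq_sym b) (eq_sym m).
  case: (eqVneq x b) => [->|xb]; last by rewrite orbF orbC.
  by rewrite /= eq_sym (negbTE ab) eq_sym (negbTE mb).
split=> //; first by rewrite eq_sym.
  have bs : b \in map fst s by rewrite fst_s // !inE eqxx orbT.
  by rewrite !npoints_rcons map_rcons mem_rcons inE bs orbT (negbTE ms) ns.
rewrite !width_rcons (size_alive_set (L := [:: a; m]) _ sam) /=; last by rewrite inE eq_sym ma.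
rewrite (size_alive_set (L := [:: m; a; b])) /=; first by rewrite ws; lia.
  by rewrite !inE negb_or ma mb ab.
by move=> x; rewrite alive_rcons sab !inE (eq_sym m); case: (x == m).
Qed.

End UpdateSequences.

Section RootedTree.
Variables (R : realType) (N : finType) (root : N) (par : N -> N) (phi : N -> R).
Variable mu : R.
Hypothesis reach_root : forall v, exists k, iter k par v = root.
Hypothesis par_root : par root = root.
Hypothesis phi_ge0 : forall v, 0 <= phi v.
Hypothesis mu_ge1 : 1 <= mu.
Hypothesis phi_le_par_div : forall v, v != root -> phi v <= phi (par v) / mu.

Let anc a v := exists k, iter k par v = a.
Let is_lca u v w := [/\ anc w u, anc w v & forall a, anc a u -> anc a v -> anc a w].

Lemma anc_trans a b c : anc a b -> anc b c -> anc a c.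
Proof. by move=> [i <-] [j <-]; exists (i + j)%N; rewrite iterD. Qed.

Lemma phi_le_par v : phi v <= phi (par v).
Proof.
have [-> | /phi_le_par_div/le_trans] := eqVneq v root; first by rewrite par_root.
apply; rewrite ler_pdivrMr ?(lt_le_trans ltr01 mu_ge1) //.
by rewrite -{1}(mulr1 (phi (par v))) ler_wpM2l.
Qed.

Lemma phi_le_anc a v : anc a v -> phi v <= phi a.
Proof. by move=> [k <-]; elim: k => //= k /le_trans; apply; apply: phi_le_par. Qed.

Lemma lca_exists u v : exists w, is_lca u v w.
Proof.
pose P k := `[< exists j, iter j par v = iter k par u >].
have exP : exists k, P k.
  have [[k uk] [j vj]] := (reach_root u, reach_root v).
  by exists k; apply/asboolP; exists j; rewrite uk vj.
case: (ex_minnP exP) => m /asboolP [j vj] min_m.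
exists (iter m par u); split; [by exists m | by exists j |].
move=> a [i ui] [i' vi']; have /min_m le_mi : P i by apply/asboolP; exists i'; rewrite ui vi'.
by exists (i - m)%N; rewrite -iterD subnK.
Qed.

(* Both lcas involving y are ancestors of y, so one is an ancestor of the other. *)
Lemma phi_lca_ultra x y z wxy wyz wxz :
  is_lca x y wxy -> is_lca y z wyz -> is_lca x z wxz ->
  phi wxz <= phi wxy \/ phi wxz <= phi wyz.
Proof.
move=> [xy [a ya] _] [[b yb] zy _] [_ _ lca_xz].
have [le_ab | lt_ba] := leqP a b.
  right; apply/phi_le_anc/lca_xz => //; apply: anc_trans xy.
  by exists (b - a)%N; rewrite -ya -yb -iterD subnK.
left; apply/phi_le_anc/lca_xz => //; apply: anc_trans zy.
by exists (a - b)%N; rewrite -ya -yb -iterD subnK // ltnW.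
Qed.

End RootedTree.

Lemma is_HST_ultra (R : realType) (X : choiceType) (S : seq X) (dd : X -> X -> R) x y z :
  is_HST S dd -> x \in S -> y \in S -> z \in S ->
  dd x z <= dd x y \/ dd x z <= dd y z.
Proof.
case=> [-> //| [mu [mu_ge1 [N [root [par [phi [leaf]]]]]]]] /=.
move=> [[par_root reach phi_ge0 _ phi_le] [_ _ _ dd_lca]] xS yS zS.
have [wxy lca_xy] := lca_exists reach (leaf x) (leaf y).
have [wyz lca_yz] := lca_exists reach (leaf y) (leaf z).
have [wxz lca_xz] := lca_exists reach (leaf x) (leaf z).
rewrite (dd_lca _ _ xS yS _ lca_xy) (dd_lca _ _ yS zS _ lca_yz) (dd_lca _ _ xS zS _ lca_xz).
exact: (phi_lca_ultra par_root phi_ge0 mu_ge1 phi_le lca_xy lca_yz lca_xz).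
Qed.

Section OnlineEmbeddings.
Variables (R : realType) (X : choiceType) (dX : X -> X -> R).
Implicit Types (A : online_alg R X) (s : update_seq X) (a b m u v : X) (lam : R).

Lemma monotone_embedding_ge A s u v :
  monotone_embedding dX A -> alive s u -> alive s v -> dX u v <= A s u v.
Proof. by move=> hA; case/lastP: s => [//|q e]; have [_ ge _] := hA q e; apply: ge. Qed.

Lemma monotone_embedding_ultra A s u v w :
  monotone_embedding dX A -> alive s u -> alive s v -> alive s w ->
  A s u w <= A s u v \/ A s u w <= A s v w.
Proof.
move=> hA; case/lastP: s => [//|q e]; have [hst _ _] := hA q e.
by rewrite -!mem_alive_set; apply: is_HST_ultra.
Qed.

Lemma strict_embedding_frozen A q e u v :
  strict_embedding dX A -> alive q u -> alive q v ->
  alive (rcons q e) u -> alive (rcons q e) v -> A (rcons q e) u v = A q u v.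
Proof. by case=> _ frozen; apply: frozen. Qed.

Lemma strict_exchange_ge A s a b m :
  strict_embedding dX A -> alive s a -> alive s b -> a != b -> m != a -> m != b ->
  A s a b <= A (exchange s b m) a m \/ A s a b <= A (exchange s a m) m b.
Proof.
move=> hA sa sb ab ma mb; set p := rcons s (m, true).
have alive_p x : alive s x -> alive p x by rewrite alive_rcons => ->; case: ifP.
have [pa pb] := (alive_p a sa, alive_p b sb).
have pm : alive p m by rewrite alive_rcons eqxx.
have ba : b != a by rewrite eq_sym.
have frozen := strict_embedding_frozen hA.
rewrite -(frozen s (m, true) a b) // -/p.
rewrite (frozen p (b, false) a m) ?(frozen p (a, false) m b) //;
  rewrite ?alive_exchange_new ?alive_exchange_kept //.
exact: monotone_embedding_ultra hA.1 pa pm pb.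
Qed.

Lemma monotone_embedding_shrink A q e u v :
  monotone_embedding dX A -> alive q u -> alive q v ->
  alive (rcons q e) u -> alive (rcons q e) v -> A (rcons q e) u v <= A q u v.
Proof. by move=> hA; have [_ _ shrink] := hA q e; apply: shrink. Qed.

Lemma monotone_exchange_le A s a b m :
  monotone_embedding dX A -> alive s a -> alive s b -> a != b -> m != b ->
  A (exchange s b m) a m <= A s a b \/
  A (exchange s b m) a m <= A (rcons s (m, true)) b m.
Proof.
move=> hA sa sb ab mb; set p := rcons s (m, true).
have alive_p x : alive s x -> alive p x by rewrite alive_rcons => ->; case: ifP.
have [pa pb] := (alive_p a sa, alive_p b sb).
have pm : alive p m by rewrite alive_rcons eqxx.
have le_am : A (exchange s b m) a m <= A p a m.
  by apply: monotone_embedding_shrink; rewrite ?alive_exchange_new ?alive_exchange_kept.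
have [le_ab | le_bm] := monotone_embedding_ultra hA pa pb pm; last first.
  by right; apply: le_trans le_bm.
left; apply: le_trans le_am (le_trans le_ab _).
exact: monotone_embedding_shrink.
Qed.

Lemma distortion_le_rcons A s e lam :
  distortion_le dX A (rcons s e) lam -> distortion_le dX A s lam.
Proof.
move=> hd t /andP [t_gt0 t_le] u v; rewrite -(takel_cat [:: e] t_le) cats1.
by apply: hd; rewrite t_gt0 size_rcons (leq_trans t_le).
Qed.

Lemma distortion_le_alive A s lam u v :
  distortion_le dX A s lam -> alive s u -> alive s v -> A s u v <= lam * dX u v.
Proof.
move=> hd su sv; rewrite -(take_size s); apply: hd; rewrite ?take_size //.
by rewrite leqnn andbT (alive_size_gt0 su).
Qed.

Lemma prob_distortion_le_alive d (Omega : measurableType d) (P : probability Omega R)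
    (A : Omega -> online_alg R X) s lam u v :
  prob_distortion_le dX P A s lam -> alive s u -> alive s v ->
  (\int[P]_w (A w s u v)%:E <= (lam * dX u v)%:E)%E.
Proof.
move=> hd su sv; rewrite -(take_size s); apply: hd; rewrite ?take_size //.
by rewrite leqnn andbT (alive_size_gt0 su).
Qed.

End OnlineEmbeddings.

Lemma sum_integral_ge d (T : measurableType d) (R : realType) (P : probability T R)
    (I : Type) (r : seq I) (f : I -> T -> R) (L : R) :
  (forall i, measurable_fun setT (f i)) -> (forall i w, 0 <= f i w) ->
  (forall w, L <= \sum_(i <- r) f i w) ->
  (L%:E <= \sum_(i <- r) \int[P]_w (f i w)%:E)%E.
Proof.
move=> mf f_ge0 L_le.
have mfE i : measurable_fun setT (fun w => (f i w)%:E) by apply/measurable_EFinP.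
have fE_ge0 i w : setT w -> (0 <= (f i w)%:E)%E by rewrite lee_fin.
have [L_le0 | L_gt0] := leP L 0.
  apply: (@le_trans _ _ 0%E); first by rewrite lee_fin.
  by apply: sume_ge0 => i _; apply: integral_ge0 => w; apply: fE_ge0.
rewrite -ge0_integral_sum //.
have := @ge0_le_integral _ _ _ P setT measurableT (cst L%:E).
rewrite integral_cst // (probability_setT P : (P : {measure set T -> \bar R}) _ = _).
rewrite mule1; apply => //.
- by move=> w _; rewrite lee_fin ltW.
- exact: emeasurable_sum.
- by move=> w _; rewrite sumEFin lee_fin.
Qed.

Section RealLine.
Variable R : realType.

Definition absdist (x y : R) := `|x - y|.

Lemma absdist_metric : is_metric absdist.
Proof.
split=> [x y|]; first exact: normr_ge0.
split=> [x y|]; first by rewrite /absdist; split=> [/eqP|->];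
  rewrite ?subrr ?normr0 // normr_eq0 subr_eq0 => /eqP.
by split=> [x y|x y z]; [apply: distrC | apply: ler_distD].
Qed.

Lemma absdist_le x y : x <= y -> absdist x y = y - x.
Proof. by move=> le_xy; rewrite /absdist distrC ger0_norm ?subr_ge0. Qed.

Record bisect_state := BisectState { hist : update_seq R; lo : R; hi : R }.

(* [true] keeps the left half; the head of [cs] is the most recent step. *)
Definition bisect (c : bool) (st : bisect_state) : bisect_state :=
  let m := (lo st + hi st) / 2 in
  if c then BisectState (exchange (hist st) (hi st) m) (lo st) m
  else BisectState (exchange (hist st) (lo st) m) m (hi st).

Definition bisection (cs : seq bool) : bisect_state :=
  foldr bisect (BisectState (init_seq 0 1) 0 1) cs.

Definition bisect_inv (st : bisect_state) (k : nat) :=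
  [/\ hi st - lo st = (2 ^+ k)^-1, two_alive (hist st) (lo st) (hi st) k &
      {in map fst (hist st), forall x, x <= lo st \/ hi st <= x}].

Lemma bisect_inv_step c st k : bisect_inv st k -> bisect_inv (bisect c st) k.+1.
Proof.
case: st => s l h [/= len two out]; rewrite /bisect /=; set m := (l + h) / 2.
have len_gt0 : 0 < h - l by rewrite len invr_gt0 exprn_gt0.
have half : (2 ^+ k.+1)^-1 = (h - l) / 2 :> R by rewrite len exprS invfM mulrC.
have ms : m \notin map fst s by apply/negP => /out; rewrite /m; lra.
case: c; split=> /=.
- by rewrite half /m; field.
- exact: two_alive_exchange.
- move=> x; rewrite mem_fst_exchange => /or3P [/eqP -> | /eqP -> | /out]; rewrite /m; lra.
- by rewrite half /m; field.
- exact/two_aliveC/two_alive_exchange/two_aliveC.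
- move=> x; rewrite mem_fst_exchange => /or3P [/eqP -> | /eqP -> | /out]; rewrite /m; lra.
Qed.

Lemma bisection_inv cs : bisect_inv (bisection cs) (size cs).
Proof.
elim: cs => [|c cs IHcs]; last exact: bisect_inv_step.
split=> /=; first by rewrite subr0 invr1.
  by apply: two_alive_init; rewrite eq_sym oner_eq0.
by move=> x; rewrite !inE => /orP [] /eqP ->; [left | right].
Qed.

Lemma bisection_ends cs :
  [/\ alive (hist (bisection cs)) (lo (bisection cs)),
      alive (hist (bisection cs)) (hi (bisection cs)) &
      absdist (lo (bisection cs)) (hi (bisection cs)) = (2 ^+ size cs)^-1].
Proof.
have [len [_ al _ _] _] := bisection_inv cs.
rewrite !al !inE !eqxx orbT -len absdist_le // -subr_ge0 len.
by rewrite invr_ge0 exprn_ge0.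
Qed.

Definition bisect_len (A : online_alg R R) (st : bisect_state) := A (hist st) (lo st) (hi st).

Lemma bisect_len_ge A cs :
  monotone_embedding absdist A -> (2 ^+ size cs)^-1 <= bisect_len A (bisection cs).
Proof.
move=> hA; have [al ah <-] := bisection_ends cs.
exact: monotone_embedding_ge.
Qed.

Lemma bisect_len_step A st k : strict_embedding absdist A -> bisect_inv st k ->
  bisect_len A st <= bisect_len A (bisect true st) \/
  bisect_len A st <= bisect_len A (bisect false st).
Proof.
case: st => s l h hA [/= len [lh al _ _] out]; rewrite /bisect_len /bisect /=.
set m := (l + h) / 2.
have len_gt0 : 0 < h - l by rewrite len invr_gt0 exprn_gt0.
have [ml mh] : m != l /\ m != h.
  by split; [rewrite gt_eqF | rewrite lt_eqF] => //; rewrite /m; lra.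
by apply: (strict_exchange_ge hA); rewrite ?al ?inE ?eqxx ?orbT.
Qed.

Lemma bisect_len_branches A cs : strict_embedding absdist A ->
  bisect_len A (bisection cs) + (2 ^+ (size cs).+1)^-1 <=
  bisect_len A (bisection (true :: cs)) + bisect_len A (bisection (false :: cs)).
Proof.
move=> hA; have := bisect_len_ge (true :: cs) hA.1.
have := bisect_len_ge (false :: cs) hA.1.
by case: (bisect_len_step hA (bisection_inv cs)) => /=; lra.
Qed.

Lemma exists_bisection_len_ge1 A K : strict_embedding absdist A ->
  exists2 cs, size cs = K & 1 <= bisect_len A (bisection cs).
Proof.
move=> hA; elim: K => [|K [cs <- len_ge1]].
  by exists [::] => //; have := bisect_len_ge [::] hA.1; rewrite expr0 invr1.
have [le_true | le_false] := bisect_len_step hA (bisection_inv cs).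
  by exists (true :: cs); last exact: le_trans le_true.
by exists (false :: cs); last exact: le_trans le_false.
Qed.

Fixpoint bitseqs (K : nat) : seq (seq bool) :=
  if K is K'.+1 then [seq true :: cs | cs <- bitseqs K'] ++ [seq false :: cs | cs <- bitseqs K']
  else [:: [::]].

Lemma size_bitseqs K : size (bitseqs K) = (2 ^ K)%N.
Proof. by elim: K => //= K IHK; rewrite size_cat !size_map IHK expnS mul2n addnn. Qed.

Lemma size_mem_bitseqs K cs : cs \in bitseqs K -> size cs = K.
Proof.
elim: K cs => [|K IHK] cs /=; first by rewrite inE => /eqP ->.
by rewrite mem_cat => /orP [] /mapP [cs' /IHK <- ->].
Qed.

Lemma sum_bitseqs_const K (c : R) : \sum_(cs <- bitseqs K) c = c * 2 ^+ K.
Proof.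
by rewrite big_const_seq count_predT iter_addr_0 size_bitseqs -(mulr_natr c) natrX.
Qed.

Lemma sum_bisect_len_ge A K : strict_embedding absdist A ->
  1 + K%:R / 2 <= \sum_(cs <- bitseqs K) bisect_len A (bisection cs).
Proof.
move=> hA; elim: K => [|K IHK].
  by rewrite big_seq1 mul0r addr0; have := bisect_len_ge [::] hA.1; rewrite expr0 invr1.
have -> : \sum_(cs <- bitseqs K.+1) bisect_len A (bisection cs) =
    \sum_(cs <- bitseqs K) (bisect_len A (bisection (true :: cs)) +
                            bisect_len A (bisection (false :: cs))).
  by rewrite big_split big_cat !big_map.
apply: le_trans (ler_sum _ (fun cs _ => bisect_len_branches cs hA)).
rewrite big_split /=.
have -> : \sum_(cs <- bitseqs K) (2 ^+ (size cs).+1)^-1 = 2^-1 :> R.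
  rewrite big_seq (eq_bigr (fun=> (2 ^+ K.+1)^-1)) => [|cs /size_mem_bitseqs -> //].
  by rewrite -big_seq sum_bitseqs_const exprS invfM -mulrA mulVf ?mulr1 // expf_neq0.
by rewrite -natr1; move: IHK; lra.
Qed.

Lemma bisect_len_le A cs lam :
  distortion_le absdist A (hist (bisection cs)) lam ->
  bisect_len A (bisection cs) <= lam / 2 ^+ size cs.
Proof.
have [al ah len] := bisection_ends cs.
by move=> /distortion_le_alive /(_ al ah); rewrite len.
Qed.

Lemma bisect_len_integral_le d (Omega : measurableType d) (P : probability Omega R)
    (A : Omega -> online_alg R R) cs lam :
  prob_distortion_le absdist P A (hist (bisection cs)) lam ->
  (\int[P]_w (bisect_len (A w) (bisection cs))%:E <= (lam / 2 ^+ size cs)%:E)%E.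
Proof.
have [al ah len] := bisection_ends cs.
by move=> /prob_distortion_le_alive /(_ al ah); rewrite len.
Qed.

Lemma strict_distortion_ge_exp A K : strict_embedding absdist A ->
  exists s, [/\ width s = 3, npoints s = K.+3 &
    forall lam, distortion_le absdist A s lam -> 2 ^+ K.+1 <= lam].
Proof.
move=> hA; have [cs csK len_ge1] := exists_bisection_len_ge1 K.+1 hA.
have [_ [_ _ np w] _] := bisection_inv cs.
exists (hist (bisection cs)); rewrite w np csK; split=> // lam /bisect_len_le.
by rewrite csK => /(le_trans len_ge1); rewrite ler_pdivlMr ?exprn_gt0 // mul1r.
Qed.

Lemma bisections_prob_distortion_ge d (Omega : measurableType d) (P : probability Omega R)
    (A : Omega -> online_alg R R) K lam :
  (forall w, strict_embedding absdist (A w)) ->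
  (forall p u v, measurable_fun setT (fun w => A w p u v)) ->
  (forall cs, cs \in bitseqs K -> prob_distortion_le absdist P A (hist (bisection cs)) lam) ->
  1 + K%:R / 2 <= lam.
Proof.
move=> hA mA hd.
have len_ge0 cs w : 0 <= bisect_len (A w) (bisection cs).
  by apply: le_trans (bisect_len_ge cs (hA w).1); rewrite invr_ge0 exprn_ge0.
have upper : (\sum_(cs <- bitseqs K) \int[P]_w (bisect_len (A w) (bisection cs))%:E <=
    \sum_(cs <- bitseqs K) (lam / 2 ^+ K)%:E)%E.
  rewrite big_seq [leRHS]big_seq; apply: lee_sum => cs csK.
  by rewrite -(size_mem_bitseqs csK); apply/bisect_len_integral_le/hd.
have := le_trans (sum_integral_ge P (fun cs => mA _ _ _) len_ge0
  (fun w => sum_bisect_len_ge K (hA w))) upper.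
by rewrite sumEFin sum_bitseqs_const mulfVK ?expf_neq0 // lee_fin.
Qed.

Lemma prob_strict_distortion_ge_lin d (Omega : measurableType d)
    (P : probability Omega R) (A : Omega -> online_alg R R) K lam :
  (forall w, strict_embedding absdist (A w)) ->
  (forall p u v, measurable_fun setT (fun w => A w p u v)) ->
  lam < 1 + K.+1%:R / 2 ->
  exists s, [/\ width s = 3, npoints s = K.+3 & ~ prob_distortion_le absdist P A s lam].
Proof.
move=> hA mA lam_lt; apply: contrapT => no_witness.
move: lam_lt; rewrite ltNge => /negP; apply.
apply: (bisections_prob_distortion_ge (P := P) hA mA) => cs /size_mem_bitseqs csK.
apply: contrapT => bad; apply: no_witness; exists (hist (bisection cs)).
by have [_ [_ _ -> ->] _] := bisection_inv cs; rewrite csK.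
Qed.

Fixpoint walk (j : nat) : update_seq R :=
  if j is j'.+1 then exchange (walk j') j'.+1%:R j'.+2%:R else init_seq 0 1.

Lemma walk_inv j :
  two_alive (walk j) 0 j.+1%:R j /\ {in map fst (walk j), forall x, x <= j.+1%:R}.
Proof.
elim: j => [|j [two le_j]].
  split; first by apply: two_alive_init; rewrite eq_sym oner_eq0.
  by move=> x; rewrite !inE => /orP [] /eqP ->; rewrite ?ler01.
have lt_j : j.+1%:R < j.+2%:R :> R by rewrite ltr_nat.
have fresh : j.+2%:R \notin map fst (walk j) by apply/negP => /le_j; rewrite leNgt lt_j.
split; first exact: two_alive_exchange.
move=> x; rewrite mem_fst_exchange => /or3P [/eqP -> | /eqP -> // | /le_j le_xj].
  exact: ltW.
exact: le_trans le_xj (ltW lt_j).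
Qed.

Lemma walk_len_le A j lam : monotone_embedding absdist A ->
  distortion_le absdist A (walk j) lam -> A (walk j) 0 j.+1%:R <= lam.
Proof.
have unit_dist i : absdist i%:R i.+1%:R = 1 :> R.
  by rewrite absdist_le ?ler_nat // -natrB // subSnn.
move=> hA; elim: j => [|j IHj] hd.
  have [[_ al _ _] _] := walk_inv 0.
  have := distortion_le_alive hd (u := 0%:R) (v := 1%:R); rewrite unit_dist mulr1.
  by apply; rewrite al !inE eqxx ?orbT.
have [[j0 al _ _] _] := walk_inv j.
have hd_add : distortion_le absdist A (rcons (walk j) (j.+2%:R, true)) lam.
  exact: distortion_le_rcons hd.
have hd_j : distortion_le absdist A (walk j) lam := distortion_le_rcons hd_add.
have [a0 aj] : alive (walk j) 0 /\ alive (walk j) j.+1%:R by split; rewrite al !inE eqxx ?orbT.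
have j2j : j.+2%:R != j.+1%:R :> R by rewrite eqr_nat gtn_eqF.
have [le_j | le_step] := monotone_exchange_le hA a0 aj j0 j2j.
  exact: le_trans le_j (IHj hd_j).
apply: le_trans le_step _.
have := distortion_le_alive hd_add (u := j.+1%:R) (v := j.+2%:R); rewrite unit_dist mulr1.
by apply; rewrite alive_rcons ?eqxx // aj; case: ifP.
Qed.

Lemma monotone_distortion_ge_lin A K : monotone_embedding absdist A ->
  exists s, [/\ width s = 3, npoints s = K.+3 &
    forall lam, distortion_le absdist A s lam -> K.+2%:R <= lam].
Proof.
move=> hA; have [[_ al np w] _] := walk_inv K.+1.
exists (walk K.+1); rewrite w np; split=> // lam hd.
apply: le_trans (walk_len_le hA hd).
have := monotone_embedding_ge hA (u := 0) (v := K.+2%:R).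
by rewrite absdist_le // subr0; apply; rewrite al !inE eqxx ?orbT.
Qed.

End RealLine.

Theorem mainTheorem3 (R : realType) :
  (* deterministic strict: Omega(2^n) *)
  (exists c : R, 0 < c /\ exists N : nat, forall n : nat, (N <= n)%N ->
     exists (X : choiceType) (dX : X -> X -> R), is_metric dX /\
       forall A : online_alg R X, strict_embedding dX A ->
         exists s : update_seq X, [/\ width s = 3%N, npoints s = n &
           ~ distortion_le dX A s (c * 2 ^+ n)])
  /\
  (* probabilistic strict: Omega(n) *)
  (exists c : R, 0 < c /\ exists N : nat, forall n : nat, (N <= n)%N ->
     exists (X : choiceType) (dX : X -> X -> R), is_metric dX /\
       forall (d : measure_display) (Omega : measurableType d)
              (P : probability Omega R) (A : Omega -> online_alg R X),
         (forall w, strict_embedding dX (A w)) ->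
         (forall p u v, measurable_fun setT (fun w => A w p u v)) ->
         exists s : update_seq X, [/\ width s = 3%N, npoints s = n &
           ~ prob_distortion_le dX P A s (c * n%:R)])
  /\
  (* deterministic monotone: Omega(n) *)
  (exists c : R, 0 < c /\ exists N : nat, forall n : nat, (N <= n)%N ->
     exists (X : choiceType) (dX : X -> X -> R), is_metric dX /\
       forall A : online_alg R X, monotone_embedding dX A ->
         exists s : update_seq X, [/\ width s = 3%N, npoints s = n &
           ~ distortion_le dX A s (c * n%:R)]).
Proof.
have K_of n : (3 <= n)%N -> exists K, n = K.+3 by exists (n - 3)%N; lia.
split; [|split]; [exists 8^-1 | exists 4^-1 | exists 2^-1]; split=> //;
  exists 3%N => n /K_of [K ->]; exists R, (@absdist R); (split; first exact: absdist_metric).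
- move=> A /(strict_distortion_ge_exp K) [s [w np lb]]; exists s; split=> // /lb.
  by rewrite !exprS; have := exprn_gt0 K (ltr0Sn R 1); lra.
- move=> d Omega P A hA mA; apply: (prob_strict_distortion_ge_lin P hA mA).
  by rewrite -[K.+3]addn3 -[K.+1]addn1 !natrD; have := ler0n R K; lra.
- move=> A /(monotone_distortion_ge_lin K) [s [w np lb]]; exists s; split=> // /lb.
  by rewrite -[K.+3]addn3 -[K.+2]addn2 !natrD; have := ler0n R K; lra.
Qed.
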